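(* The generator $a$ is not left invertible in $\Pi_2=\langle a,b,c\mid (ab^ic)^2=1\ (i\geq 1)\rangle$: there is no word $u\in\{a,b,c\}^\ast$ with $ua=1$ in $\Pi_2$. In particular, $a$ is not invertible in $\Pi_2$. *)

(* monoid presentation Pi_2 = < a, b, c | (a b^i c)^2 = 1 (i >= 1) >
   presented as a monoid: words are sequences over the alphabet {a,b,c},
   and equality in Pi_2 is the congruence on the free monoid generated by
   the defining relations. *)
From mathcomp Require Import all_boot.
Set Implicit Arguments. Unset Strict Implicit. Unset Printing Implicit Defensive.

Inductive gen : Type := ga | gb | gc.

Definition word := seq gen.

Definition abc (i : nat) : word := ga :: nseq i gb ++ [:: gc].

Definition Pi2_rel (l r : word) : Prop :=
  exists2 i, 1 <= i & l = abc i ++ abc i /\ r = [::].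

Inductive mon_cong (R : word -> word -> Prop) : word -> word -> Prop :=
| mc_rel  : forall x y l r, R l r -> mon_cong R (x ++ l ++ y) (x ++ r ++ y)
| mc_refl : forall w, mon_cong R w w
| mc_sym  : forall u v, mon_cong R u v -> mon_cong R v u
| mc_trans : forall u v w, mon_cong R u v -> mon_cong R v w -> mon_cong R u w.

Definition Pi2_eq (u v : word) : Prop := mon_cong Pi2_rel u v.

From mathcomp Require Import all_boot.

(* Let the free monoid on {a,b,c} act on the right on the
   natural numbers by a "counter": a increments, b does nothing, and c
   decrements (truncated at 0).  Every relator a b^i c acts as the
   identity (the increment by a is undone by c, since the counter is then
   positive), so the action factors through Pi_2.  If u a = 1 in Pi_2,
   then 0 = 0.(u a) = (0.u) + 1 > 0, a contradiction. *)

Section WordActions.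

Variable (T : Type) (step : T -> gen -> T).

Definition act (w : word) (t : T) : T := foldl step t w.

Lemma act_cat (v w : word) (t : T) : act (v ++ w) t = act w (act v t).
Proof. exact: foldl_cat. Qed.

Lemma act_mon_cong (R : word -> word -> Prop) :
  (forall l r t, R l r -> act l t = act r t) ->
  forall u v, mon_cong R u v -> forall t, act u t = act v t.
Proof.
move=> act_rel u v; elim=> // [x y l r Rlr t | u0 v0 w0 _ IH1 _ IH2 t].
- by rewrite !act_cat (act_rel _ _ _ Rlr).
- by rewrite IH1 IH2.
Qed.

End WordActions.

Arguments act {T} step w t.

Definition counter (n : nat) (g : gen) : nat :=
  match g with ga => n.+1 | gb => n | gc => n.-1 end.

Lemma counter_abc (i n : nat) : act counter (abc i) n = n.
Proof.
have counter_bs m : act counter (nseq i gb) m = m by elim: i.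
by rewrite /abc -cat1s !act_cat counter_bs.
Qed.

Lemma counter_Pi2 (u v : word) :
  Pi2_eq u v -> forall n, act counter u n = act counter v n.
Proof.
apply: act_mon_cong => l r n [i _ [-> ->]].
by rewrite act_cat !counter_abc.
Qed.

Theorem mainTheorem5 : ~ exists u : word, Pi2_eq (u ++ [:: ga]) [::].
Proof.
case=> u /counter_Pi2 /(_ 0).
by rewrite act_cat.
Qed.
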